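(* Let $a\in C^1(\mathbb R)$ be convex, let $\eta\in C^2(\mathbb R)$ and let $q$ satisfy $q'=\eta'a'$. For $u^+\ne u^-$ define $$c_\eta(u^+,u^-)=q(u^+)-q(u^-)-\frac{a(u^+)-a(u^-)}{u^+-u^-}\big(\eta(u^+)-\eta(u^-)\big).$$ Then for all $u^\pm\in\mathbb R$ with $u^+\neq u^-$, $$|c_\eta(u^+,u^-)|\le\frac12\Big(\sup_{[u^-,u^+]}|\eta''|\Big)\,\Delta(u^+,u^-).$$
   Context: $a''$ denotes the distributional second derivative of $a$ (a nonnegative measure). $[u^-,u^+]$ denotes the closed segment between $u^-$ and $u^+$ regardless of order. The regularity cost is $\Delta(u_1,u_2)=\frac12\int_{u_1}^{u_2}\int_{u_1}^{u_2}|a'(v)-a'(w)|\,dv\,dw=\int_{[u_1,u_2]}(u_2-s)(s-u_1)\,a''(ds)$. *)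

From Stdlib Require Import Reals.
From Coquelicot Require Import Coquelicot.
Open Scope R_scope.

Definition convex_fun (a : R -> R) : Prop :=
  forall x y t, 0 <= t <= 1 -> a (t * x + (1 - t) * y) <= t * a x + (1 - t) * a y.

Definition is_C1_real (a : R -> R) : Prop :=
  (forall x, ex_derive a x) /\ (forall x, continuous (Derive a) x).

Definition is_C2_real (f : R -> R) : Prop :=
  (forall x, ex_derive f x) /\ (forall x, ex_derive (Derive f) x) /\
  (forall x, continuous (Derive (Derive f)) x).

Definition c_eta (a eta q : R -> R) (up um : R) : R :=
  q up - q um - (a up - a um) / (up - um) * (eta up - eta um).

Definition Delta_cost (a : R -> R) (u1 u2 : R) : R :=
  / 2 * RInt (fun w => RInt (fun v => Rabs (Derive a v - Derive a w)) u1 u2) u1 u2.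

(* sup of |f| over the closed segment between x and y (regardless of order);
   finite whenever f is continuous. *)
Definition sup_abs_seg (f : R -> R) (x y : R) : R :=
  real (Lub_Rbar (fun r => exists s, Rmin x y <= s <= Rmax x y /\ r = Rabs (f s))).

From Stdlib Require Import Reals Lra.
From Coquelicot Require Import Coquelicot.
Open Scope R_scope.

(* For u1 < u2 let D >= 0 be the gap between the chord of the convex function a
   over [u1, u2] and a itself.  An integration by parts shows that c_eta(u2, u1)
   is the integral of eta'' D, hence |c_eta| <= M \int D with M = sup |eta''|.  On the
   other hand 4 \int D is the integral over w of the two tangent-line gaps
   a(u_i) - a(w) - a'(w)(u_i - w), and each of these is an integral of
   a'(v) - a'(w) over v between w and u_i, hence bounded by \int |a'(v) - a'(w)| dv;
   integrating in w gives 4 \int D <= 2 Delta. *)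

Definition chord_gap (a : R -> R) (u1 u2 t : R) : R :=
  a u1 + (a u2 - a u1) / (u2 - u1) * (t - u1) - a t.

Definition tangent_gap (a : R -> R) (w v : R) : R :=
  a v - a w - Derive a w * (v - w).

Lemma c_eta_sym (a eta q : R -> R) (u1 u2 : R) :
  c_eta a eta q u1 u2 = - c_eta a eta q u2 u1.
Proof.
  unfold c_eta, Rdiv.
  replace (u1 - u2) with (- (u2 - u1)) by ring.
  rewrite Rinv_opp; ring.
Qed.

Lemma sup_abs_seg_sym (f : R -> R) (x y : R) : sup_abs_seg f x y = sup_abs_seg f y x.
Proof. unfold sup_abs_seg; rewrite Rmin_comm, Rmax_comm; reflexivity. Qed.

Lemma Rabs_le_sup_abs_seg (f : R -> R) (x y s : R) :
  (forall z, continuous f z) -> Rmin x y <= s <= Rmax x y ->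
  Rabs (f s) <= sup_abs_seg f x y.
Proof.
  intros Hf Hs; unfold sup_abs_seg.
  set (E := fun r => exists s0, Rmin x y <= s0 <= Rmax x y /\ r = Rabs (f s0)).
  destruct (continuity_ab_maj (fun s0 => Rabs (f s0)) (Rmin x y) (Rmax x y))
    as [smax [Hmax _]].
  { apply Rmin_Rmax. }
  { intros c _; apply continuity_pt_filterlim, continuous_Rabs_comp, Hf. }
  destruct (Lub_Rbar_correct E) as [Hub Hlub].
  assert (Hle : Rbar_le (Lub_Rbar E) (Rabs (f smax))).
  { apply Hlub; intros r [s0 [Hs0 ->]]; apply Hmax, Hs0. }
  assert (Hge : Rbar_le (Rabs (f s)) (Lub_Rbar E)) by (apply Hub; exists s; auto).
  destruct (Lub_Rbar E); simpl in *; easy.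
Qed.

Lemma chord_gap_ge0 (a : R -> R) (u1 u2 t : R) :
  convex_fun a -> u1 < u2 -> u1 <= t <= u2 -> 0 <= chord_gap a u1 u2 t.
Proof.
  intros Hconv Hu Ht.
  set (s := (u2 - t) / (u2 - u1)).
  assert (Hs : 0 <= s <= 1).
  { unfold s; split.
    - apply Rdiv_le_0_compat; lra.
    - apply Rmult_le_reg_r with (u2 - u1); [lra|].
      unfold Rdiv; rewrite Rmult_assoc, Rinv_l by lra; lra. }
  specialize (Hconv u1 u2 s Hs).
  replace (s * u1 + (1 - s) * u2) with t in Hconv by (unfold s; field; lra).
  replace (s * a u1 + (1 - s) * a u2) with (a u1 + (a u2 - a u1) / (u2 - u1) * (t - u1))
    in Hconv by (unfold s; field; lra).
  unfold chord_gap; lra.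
Qed.

Section C1_function.

Variable a : R -> R.
Hypothesis Hda : forall x, ex_derive a x.
Hypothesis Hca : forall x, continuous (Derive a) x.

Lemma continuous_chord_gap (u1 u2 t : R) : continuous (chord_gap a u1 u2) t.
Proof.
  apply (ex_derive_continuous (chord_gap a u1 u2)); unfold chord_gap; auto_derive; auto.
Qed.

Lemma continuous_abs_Derive_sub (c x : R) :
  continuous (fun v => Rabs (Derive a v - c)) x.
Proof.
  apply continuous_Rabs_comp,
    (continuous_minus (K := R_AbsRing) (Derive a) (fun _ => c)); auto using continuous_const.
Qed.

Lemma ex_RInt_abs_Derive_sub (c u1 u2 : R) :
  ex_RInt (fun v => Rabs (Derive a v - c)) u1 u2.
Proof.
  apply (ex_RInt_continuous (V := R_CompleteNormedModule)); intros z _.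
  apply continuous_abs_Derive_sub.
Qed.

Lemma continuous_RInt_abs_Derive_sub (u1 u2 x : R) : u1 <= u2 ->
  continuous (fun c => RInt (fun v => Rabs (Derive a v - c)) u1 u2) x.
Proof.
  intros Hu; apply continuity_pt_filterlim.
  intros eps Heps; exists (eps / (u2 - u1 + 1)); split.
  { apply Rdiv_lt_0_compat; lra. }
  intros y [_ Hy]; simpl in *; unfold R_dist in *.
  (* c |-> |a'(v) - c| is 1-Lipschitz, so the integral is (u2 - u1)-Lipschitz in c *)
  change (Rminus ?p ?r) with (minus p r) at 1.
  rewrite <- (RInt_minus (V := R_CompleteNormedModule)) by apply ex_RInt_abs_Derive_sub.
  eapply Rle_lt_trans.
  { apply abs_RInt_le_const with (M := Rabs (y - x)); [exact Hu | |].
    - apply (ex_RInt_minus (V := R_CompleteNormedModule)); apply ex_RInt_abs_Derive_sub.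
    - intros t _; change (minus ?p ?r) with (p - r).
      eapply Rle_trans; [apply Rabs_triang_inv2|].
      right; rewrite <- Rabs_Ropp; f_equal; ring. }
  apply Rle_lt_trans with ((u2 - u1 + 1) * Rabs (y - x)).
  { apply Rmult_le_compat_r; [apply Rabs_pos | lra]. }
  apply Rmult_lt_reg_l with (/ (u2 - u1 + 1)); [apply Rinv_0_lt_compat; lra|].
  rewrite <- Rmult_assoc, Rinv_l, Rmult_1_l by lra.
  rewrite Rmult_comm; exact Hy.
Qed.

Lemma ex_RInt_Delta_integrand (u1 u2 : R) :
  ex_RInt (fun w => RInt (fun v => Rabs (Derive a v - Derive a w)) u1 u2) u1 u2.
Proof.
  assert (Hle : forall u1 u2, u1 <= u2 ->
    ex_RInt (fun w => RInt (fun v => Rabs (Derive a v - Derive a w)) u1 u2) u1 u2).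
  { intros v1 v2 Hv.
    apply (ex_RInt_continuous (V := R_CompleteNormedModule)); intros w _.
    apply (continuous_comp (Derive a) (fun c => RInt (fun v => Rabs (Derive a v - c)) v1 v2)).
    - apply Hca.
    - apply continuous_RInt_abs_Derive_sub, Hv. }
  destruct (Rle_or_lt u1 u2) as [Hu | Hu]; [auto|].
  apply (ex_RInt_swap (V := R_CompleteNormedModule)).
  apply (ex_RInt_ext (fun w => opp (RInt (fun v => Rabs (Derive a v - Derive a w)) u2 u1))).
  - intros w _; apply (opp_RInt_swap (V := R_CompleteNormedModule)), ex_RInt_abs_Derive_sub.
  - apply (ex_RInt_opp (V := R_CompleteNormedModule)), Hle; lra.
Qed.

Lemma Delta_cost_sym (u1 u2 : R) : Delta_cost a u2 u1 = Delta_cost a u1 u2.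
Proof.
  unfold Delta_cost; f_equal.
  rewrite (RInt_ext (fun w => RInt (fun v => Rabs (Derive a v - Derive a w)) u2 u1)
            (fun w => opp (RInt (fun v => Rabs (Derive a v - Derive a w)) u1 u2))).
  2:{ intros w _; symmetry; apply opp_RInt_swap, ex_RInt_abs_Derive_sub. }
  rewrite RInt_opp by apply ex_RInt_swap, ex_RInt_Delta_integrand.
  apply opp_RInt_swap, ex_RInt_swap, ex_RInt_Delta_integrand.
Qed.

Lemma is_RInt_tangent_gap (w v : R) :
  is_RInt (fun t => Derive a t - Derive a w) w v (tangent_gap a w v).
Proof.
  replace (tangent_gap a w v)
    with (minus (a v - Derive a w * v) (a w - Derive a w * w) : R)
    by (unfold tangent_gap, minus, plus, opp; simpl; ring).
  apply (is_RInt_derive (V := R_CompleteNormedModule) (fun t => a t - Derive a w * t)).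
  - intros t _; auto_derive; [apply Hda|].
    change (Derive (fun x => a x) t) with (Derive a t); ring.
  - intros t _; apply (continuous_minus (K := R_AbsRing) (Derive a) (fun _ => Derive a w));
      auto using continuous_const.
Qed.

Lemma tangent_gaps_le_RInt (u1 u2 w : R) : u1 <= w <= u2 ->
  tangent_gap a w u1 + tangent_gap a w u2 <=
  RInt (fun v => Rabs (Derive a v - Derive a w)) u1 u2.
Proof.
  intros Hw.
  rewrite <- (RInt_Chasles (V := R_CompleteNormedModule) _ u1 w u2)
    by apply ex_RInt_abs_Derive_sub.
  change (plus ?x ?y) with (x + y).
  assert (H1 : tangent_gap a w u1 <= RInt (fun v => Rabs (Derive a v - Derive a w)) u1 w).
  { assert (Hgap := is_RInt_opp _ _ _ _ (is_RInt_swap _ _ _ _ (is_RInt_tangent_gap w u1))).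
    rewrite opp_opp in Hgap.
    apply (is_RInt_le _ (fun v => Rabs (Derive a v - Derive a w)) u1 w _ _ (proj1 Hw) Hgap).
    - apply (RInt_correct (V := R_CompleteNormedModule)), ex_RInt_abs_Derive_sub.
    - intros t _; apply Rabs_maj2. }
  assert (H2 : tangent_gap a w u2 <= RInt (fun v => Rabs (Derive a v - Derive a w)) w u2).
  { apply (is_RInt_le _ (fun v => Rabs (Derive a v - Derive a w)) w u2 _ _ (proj2 Hw)
             (is_RInt_tangent_gap w u2)).
    - apply (RInt_correct (V := R_CompleteNormedModule)), ex_RInt_abs_Derive_sub.
    - intros t _; apply Rle_abs. }
  lra.
Qed.

Lemma continuous_tangent_gap (v w : R) : continuous (fun w => tangent_gap a w v) w.
Proof.
  apply (continuous_minus (K := R_AbsRing) (fun w => a v - a w) (fun w => Derive a w * (v - w))).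
  - apply (continuous_minus (K := R_AbsRing) (fun _ => a v) a);
      [apply continuous_const | apply ex_derive_continuous, Hda].
  - apply (continuous_mult (K := R_AbsRing) (Derive a) (fun w => v - w)); [apply Hca|].
    apply (ex_derive_continuous (fun w => v - w)); auto_derive; auto.
Qed.

Lemma is_RInt_tangent_gaps (u1 u2 : R) : u1 <> u2 ->
  is_RInt (fun w => tangent_gap a w u1 + tangent_gap a w u2) u1 u2
    (4 * RInt (chord_gap a u1 u2) u1 u2).
Proof.
  intros Hu.
  set (A := (a u2 - a u1) / (u2 - u1)).
  (* the primitives of a cancel in the difference, which has an explicit primitive *)
  set (G := fun w => a w * (2 * w - u1 - u2) + (a u1 + a u2) * w
                     - 4 * (a u1 * (w - u1) + A * (w - u1) * (w - u1) / 2)).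
  assert (Hdiff : is_RInt (fun w => tangent_gap a w u1 + tangent_gap a w u2
                                    - 4 * chord_gap a u1 u2 w) u1 u2 0).
  { replace 0 with (minus (G u2) (G u1) : R)
      by (unfold minus, plus, opp, G, A; simpl; field; lra).
    apply (is_RInt_derive (V := R_CompleteNormedModule)).
    - intros x _; unfold G, tangent_gap, chord_gap; fold A.
      auto_derive; [apply Hda|].
      change (Derive (fun x => a x) x) with (Derive a x); field.
    - intros x _.
      apply (continuous_minus (K := R_AbsRing)
               (fun w => tangent_gap a w u1 + tangent_gap a w u2)
               (fun w => 4 * chord_gap a u1 u2 w)).
      + apply (continuous_plus (K := R_AbsRing) (fun w => tangent_gap a w u1)
                 (fun w => tangent_gap a w u2)); apply continuous_tangent_gap.
      + apply (continuous_mult (K := R_AbsRing) (fun _ => 4) (chord_gap a u1 u2));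
          auto using continuous_const, continuous_chord_gap. }
  assert (Hgap : is_RInt (chord_gap a u1 u2) u1 u2 (RInt (chord_gap a u1 u2) u1 u2)).
  { apply (RInt_correct (V := R_CompleteNormedModule)).
    apply (ex_RInt_continuous (V := R_CompleteNormedModule)); intros z _.
    apply continuous_chord_gap. }
  replace (4 * RInt (chord_gap a u1 u2) u1 u2)
    with (plus 0 (scal 4 (RInt (chord_gap a u1 u2) u1 u2)))
    by (unfold plus, scal; simpl; unfold mult; simpl; ring).
  eapply is_RInt_ext; [| exact (is_RInt_plus _ _ _ _ _ _ Hdiff (is_RInt_scal _ _ _ 4 _ Hgap))].
  intros x _; unfold plus, scal; simpl; unfold mult; simpl; ring.
Qed.

Lemma RInt_chord_gap_le_Delta_cost (u1 u2 : R) : u1 < u2 ->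
  2 * RInt (chord_gap a u1 u2) u1 u2 <= Delta_cost a u1 u2.
Proof.
  intros Hu.
  assert (H4 : 4 * RInt (chord_gap a u1 u2) u1 u2 <=
               RInt (fun w => RInt (fun v => Rabs (Derive a v - Derive a w)) u1 u2) u1 u2).
  { apply (is_RInt_le _ (fun w => RInt (fun v => Rabs (Derive a v - Derive a w)) u1 u2)
             u1 u2 _ _ (Rlt_le _ _ Hu) (is_RInt_tangent_gaps u1 u2 (Rlt_not_eq _ _ Hu))).
    - apply (RInt_correct (V := R_CompleteNormedModule)), ex_RInt_Delta_integrand.
    - intros w Hw; apply tangent_gaps_le_RInt; lra. }
  unfold Delta_cost; lra.
Qed.

End C1_function.

Lemma is_RInt_c_eta (a eta q : R -> R) (u1 u2 : R) : u1 <> u2 ->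
  (forall x, ex_derive a x) -> is_C2_real eta ->
  (forall x, is_derive q x (Derive eta x * Derive a x)) ->
  is_RInt (fun t => Derive (Derive eta) t * chord_gap a u1 u2 t) u1 u2 (c_eta a eta q u2 u1).
Proof.
  intros Hu Hda [Hde [Hdde Hcdde]] Hq.
  set (A := (a u2 - a u1) / (u2 - u1)).
  set (F := fun t => Derive eta t * chord_gap a u1 u2 t - A * eta t + q t).
  replace (c_eta a eta q u2 u1) with (minus (F u2) (F u1) : R)
    by (unfold minus, plus, opp, F, chord_gap, c_eta, A; simpl; field; lra).
  apply (is_RInt_derive (V := R_CompleteNormedModule)).
  - intros x _; unfold F, chord_gap; fold A.
    assert (Hq' : Derive q x = Derive eta x * Derive a x) by (apply is_derive_unique, Hq).
    auto_derive.
    + repeat split; auto; exists (Derive eta x * Derive a x); apply Hq.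
    + change (Derive (fun x => q x) x) with (Derive q x).
      change (Derive (fun x => eta x) x) with (Derive eta x).
      change (Derive (fun x => a x) x) with (Derive a x).
      change (Derive (fun x => Derive eta x) x) with (Derive (Derive eta) x).
      rewrite Hq'; ring.
  - intros x _.
    apply (continuous_mult (K := R_AbsRing) (Derive (Derive eta)) (chord_gap a u1 u2)).
    + apply Hcdde.
    + apply continuous_chord_gap, Hda.
Qed.

Lemma Rabs_c_eta_le (a eta q : R -> R) (u1 u2 M : R) : u1 < u2 ->
  is_C1_real a -> convex_fun a -> is_C2_real eta ->
  (forall x, is_derive q x (Derive eta x * Derive a x)) ->
  (forall s, u1 <= s <= u2 -> Rabs (Derive (Derive eta) s) <= M) ->
  Rabs (c_eta a eta q u2 u1) <= / 2 * M * Delta_cost a u1 u2.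
Proof.
  intros Hu [Hda Hca] Hconv Heta Hq HM.
  assert (HM0 : 0 <= M).
  { apply Rle_trans with (Rabs (Derive (Derive eta) u1)); [apply Rabs_pos | apply HM; lra]. }
  assert (Hgap : is_RInt (chord_gap a u1 u2) u1 u2 (RInt (chord_gap a u1 u2) u1 u2)).
  { apply (RInt_correct (V := R_CompleteNormedModule)).
    apply (ex_RInt_continuous (V := R_CompleteNormedModule)); intros z _.
    apply continuous_chord_gap, Hda. }
  assert (Hc : Rabs (c_eta a eta q u2 u1) <= M * RInt (chord_gap a u1 u2) u1 u2).
  { apply (norm_RInt_le (V := R_NormedModule)
             (fun t => Derive (Derive eta) t * chord_gap a u1 u2 t)
             (fun t => M * chord_gap a u1 u2 t) u1 u2 _ _ (Rlt_le _ _ Hu)).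
    - intros t Ht; change (norm ?y) with (Rabs y).
      rewrite Rabs_mult, (Rabs_pos_eq (chord_gap a u1 u2 t)) by (apply chord_gap_ge0; auto).
      apply Rmult_le_compat_r; [apply chord_gap_ge0 | apply HM]; auto.
    - apply is_RInt_c_eta; auto; lra.
    - exact (is_RInt_scal _ _ _ M _ Hgap). }
  assert (HD := RInt_chord_gap_le_Delta_cost a Hda Hca u1 u2 Hu).
  apply Rle_trans with (1 := Hc).
  replace (/ 2 * M * Delta_cost a u1 u2) with (M * (/ 2 * Delta_cost a u1 u2)) by ring.
  apply Rmult_le_compat_l; lra.
Qed.

Theorem lemma2p1 (a eta q : R -> R)
  (Ha : is_C1_real a) (Hconv : convex_fun a) (Heta : is_C2_real eta)
  (Hq : forall x, is_derive q x (Derive eta x * Derive a x))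
  (up um : R) (Hne : up <> um) :
  Rabs (c_eta a eta q up um) <=
    / 2 * sup_abs_seg (Derive (Derive eta)) um up * Delta_cost a up um.
Proof.
  assert (Hordered : forall u1 u2, u1 < u2 ->
    Rabs (c_eta a eta q u2 u1) <=
      / 2 * sup_abs_seg (Derive (Derive eta)) u1 u2 * Delta_cost a u1 u2).
  { intros u1 u2 Hu; apply Rabs_c_eta_le; auto.
    intros s Hs; apply Rabs_le_sup_abs_seg; [apply Heta |].
    rewrite Rmin_left, Rmax_right; lra. }
  destruct (Rlt_or_le um up) as [Hlt | Hle].
  - rewrite (Delta_cost_sym a (proj2 Ha)); auto.
  - rewrite c_eta_sym, Rabs_Ropp, sup_abs_seg_sym; apply Hordered; lra.
Qed.
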